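(* Let $G = (N,\Sigma,R,S)$ be a linear context-free grammar. Then there exists a test set $T \subseteq L(G)$ for $L(G)$ containing at most $2|R|^3$ words, where $|R|$ is the number of production rules of $G$.
   Context: A context-free grammar is $G=(N,\Sigma,R,S)$ with non-terminals $N$, terminals $\Sigma$, productions $R \subseteq N \times (N\uplus\Sigma)^*$ (written $A \to \mathit{rhs}$), start symbol $S$; $L(G)$ is the set of words over $\Sigma$ it generates. $G$ is linear if every right-hand side contains at most one non-terminal occurrence. A morphism $f:\Sigma^*\to\Gamma^*$ satisfies $f(\epsilon)=\epsilon$ and $f(uv)=f(u)f(v)$. For a language $L\subseteq\Sigma^*$, a subset $T\subseteq L$ is a test set for $L$ if for every alphabet $\Gamma$ and any two morphisms $f,g:\Sigma^*\to\Gamma^*$, if $f(w)=g(w)$ for all $w\in T$ then $f(w)=g(w)$ for all $w\in L$. *)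

From mathcomp Require Import all_boot.
Set Implicit Arguments. Unset Strict Implicit. Unset Printing Implicit Defensive.

(* A context-free grammar G = (N, Sigma, R, S): nonterminals N and terminals
   Sigma are finite types; a symbol is [inl A] (nonterminal) or [inr a]
   (terminal); productions are pairs (A, rhs). *)
Record cfg (N Sigma : finType) := Cfg {
  rules : seq (N * seq (N + Sigma));
  start : N
}.

Definition nrules (N Sigma : finType) (G : cfg N Sigma) : nat :=
  size (undup (rules G)).

Inductive gen (N Sigma : finType) (G : cfg N Sigma) : N -> seq Sigma -> Prop :=
| gen_rule A rhs w : (A, rhs) \in rules G -> gen_rhs G rhs w -> gen G A w
with gen_rhs (N Sigma : finType) (G : cfg N Sigma) : seq (N + Sigma) -> seq Sigma -> Prop :=
| gen_nil : gen_rhs G [::] [::]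
| gen_term a rhs w : gen_rhs G rhs w -> gen_rhs G (inr a :: rhs) (a :: w)
| gen_nonterm B rhs u v :
    gen G B u -> gen_rhs G rhs v -> gen_rhs G (inl B :: rhs) (u ++ v).

Definition lang (N Sigma : finType) (G : cfg N Sigma) (w : seq Sigma) : Prop :=
  gen G (start G) w.

Definition is_nonterm (N Sigma : Type) (x : N + Sigma) : bool :=
  if x is inl _ then true else false.

Definition linear (N Sigma : finType) (G : cfg N Sigma) : Prop :=
  forall p, p \in rules G -> count (@is_nonterm N Sigma) p.2 <= 1.

Definition is_morphism (Sigma Gamma : Type) (f : seq Sigma -> seq Gamma) : Prop :=
  f [::] = [::] /\ forall u v, f (u ++ v) = f u ++ f v.

Definition test_set (Sigma : finType) (L : seq Sigma -> Prop) (T : seq (seq Sigma)) : Prop :=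
  (forall w, w \in T -> L w) /\
  forall (Gamma : finType) (f g : seq Sigma -> seq Gamma),
    is_morphism f -> is_morphism g ->
    (forall w, w \in T -> f w = g w) ->
    forall w, L w -> f w = g w.

(* First, the free monoid embeds into the affine group of Q,
   where two elements commute iff plane vectors attached to them are parallel,
   so commuting with a nontrivial element is transitive. In such a group, two
   morphisms that agree on the fifteen words [p_a q_b x_c m_d x'_c q'_b p'_a],
   (a, b, c, d) in {0,1}^4 \ {(1,1,1,1)}, also agree on the sixteenth.
   Second, a derivation of a linear grammar is a sequence of rules. Order these
   sequences shortlex and call a walk canonical when no smaller walk has the
   same endpoints. Splitting a derivation as [K e D] with [K] canonical and
   [K e] not, and repeating on [D], either stops after at most three rules [e]
   (which then determine the derivation, giving at most 1 + |R| + |R|^2 + |R|^3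
   test words) or yields four consecutive segments [K e], each replaceable by a
   smaller walk with the same endpoints. The fifteen proper replacements are
   smaller derivations with the same palindromic factorisation of their yields,
   so by induction both morphisms agree on them, hence on the derivation. *)

From HB Require Import structures.
From mathcomp Require Import all_boot zify ring.
From mathcomp Require all_algebra.
From Stdlib Require Import Classical ClassicalEpsilon.
Set Implicit Arguments. Unset Strict Implicit. Unset Printing Implicit Defensive.

Definition commute_transitive (H : groupType) :=
  forall x y z : H, y != 1%g -> commute x y -> commute y z -> commute x z.

Section CommuteTransitiveGroup.
Local Open Scope group_scope.
Variable H : groupType.

Lemma sandwich_eq_commute (l0 l r0 r f0 f g0 g : H) :
  l0 * f0 * r0 = g0 -> l * f0 * r = g0 -> l0 * f * r0 = g ->
  l * f * r = g <-> commute (l0^-1 * l) (f * f0^-1).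
Proof.
have [lam ->] : exists lam, l = l0 * lam by exists (l0^-1 * l); rewrite mulVKg.
have [z ->] : exists z, f = z * f0 by exists (f * f0^-1); rewrite mulgVK.
rewrite mulKg mulgK => e00 e10 e01.
have -> : r = f0^-1 * lam^-1 * f0 * r0.
  by apply: (mulgI (l0 * lam * f0)); rewrite e10 -e00 !mulgA !mulgK.
rewrite -e01 !mulgA mulgK /commute; split=> [e | lam_z].
  apply: (mulIg lam^-1); apply: (mulgI l0); apply: (mulIg (f0 * r0)).
  by rewrite mulgK !mulgA.
by rewrite -(mulgA l0 lam) lam_z !mulgA mulgK.
Qed.

Lemma mulg_sandwichE (u y v U Y V : H) :
  u * y * v = U * Y * V <-> U^-1 * u * y * (v * V^-1) = Y.
Proof.
split=> [e | <-]; last by rewrite !mulgA mulgV mul1g mulgVK.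
have -> : U^-1 * u * y * (v * V^-1) = U^-1 * (u * y * v) * V^-1 by rewrite !mulgA.
by rewrite e !mulgA mulVg mul1g mulgK.
Qed.

Hypothesis CT : commute_transitive H.

(* With [lam a b := L00^-1 L a b] and [z c d := F c d F00^-1], the equation at
   (a, b, c, d) says that [lam a b] commutes with [z c d]; transitivity through a
   nontrivial [lam a b] and [z c d] with (a, b), (c, d) <> (1, 1) gives the last one. *)
Lemma square_agree (L R F G : bool -> bool -> H) :
  (forall a b c d, ~~ [&& a, b, c & d] -> L a b * F c d * R a b = G c d) ->
  (L true false = L false false -> L true true = L false true) ->
  (F false true = F false false -> F true true = F true false) ->
  L true true * F true true * R true true = G true true.
Proof.
move=> agree L_rigid F_rigid.
pose lam a b := (L false false)^-1 * L a b; pose z c d := F c d * (F false false)^-1.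
have commute_lz a b c d : ~~ [&& a, b, c & d] -> commute (lam a b) (z c d).
  move=> abcd; have e10 : ~~ [&& a, b, false & false] by rewrite !andbF.
  exact: (sandwich_eq_commute (agree false false false false isT)
    (agree a b false false e10) (agree false false c d isT)).1 (agree _ _ _ _ abcd).
apply: (sandwich_eq_commute (agree false false false false isT)
  (agree true true false false isT) (agree false false true true isT)).2.
rewrite -/(lam _ _) -/(z _ _).
have [-> | lam11] := eqVneq (lam true true) 1; first exact/commute_sym/commute1.
have [-> | z11] := eqVneq (z true true) 1; first exact: commute1.
have [a [b [ab lam_ab]]] : exists a b, ~~ (a && b) /\ lam a b != 1.
  have [e10 | ] := eqVneq (lam true false) 1; last by exists true, false.
  have [e01 | ] := eqVneq (lam false true) 1; last by exists false, true.
  move: lam11; rewrite /lam L_rigid; last by move: e10 => /mulg1_eq; rewrite invgK.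
  by move: e01 => /mulg1_eq; rewrite invgK => <-; rewrite mulVg eqxx.
have [c [d [cd z_cd]]] : exists c d, ~~ (c && d) /\ z c d != 1.
  have [e10 | ] := eqVneq (z true false) 1; last by exists true, false.
  have [e01 | ] := eqVneq (z false true) 1; last by exists false, true.
  move: z11; rewrite /z F_rigid; last exact: divg1_eq.
  by move: e10 => /divg1_eq ->; rewrite mulgV eqxx.
have lam11_lam : commute (lam true true) (lam a b).
  apply: (CT z_cd); first exact: commute_lz.
  by apply/commute_sym/commute_lz; apply: contra ab => /and4P[-> -> _ _].
by apply: (CT lam_ab lam11_lam); apply: commute_lz; rewrite !andbT.
Qed.

Lemma nested_agree (T : Type) (F G : seq T -> H) :
    {morph F : u v / u ++ v >-> u * v} -> {morph G : u v / u ++ v >-> u * v} ->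
  forall p q x m x' q' p' : bool -> seq T,
  (forall a b c d, ~~ [&& a, b, c & d] ->
     F (p a ++ q b ++ x c ++ m d ++ x' c ++ q' b ++ p' a) =
     G (p a ++ q b ++ x c ++ m d ++ x' c ++ q' b ++ p' a)) ->
  F (p true ++ q true ++ x true ++ m true ++ x' true ++ q' true ++ p' true) =
  G (p true ++ q true ++ x true ++ m true ++ x' true ++ q' true ++ p' true).
Proof.
move=> Fcat Gcat p q x m x' q' p' agree.
pose L a b := (G (p a ++ q b))^-1 * F (p a ++ q b).
pose R a b := F (q' b ++ p' a) * (G (q' b ++ p' a))^-1.
pose Fmid c d := F (x c ++ m d ++ x' c).
pose Gmid c d := G (x c ++ m d ++ x' c).
have agreeE a b c d :
  F (p a ++ q b ++ x c ++ m d ++ x' c ++ q' b ++ p' a) =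
  G (p a ++ q b ++ x c ++ m d ++ x' c ++ q' b ++ p' a) <->
  L a b * Fmid c d * R a b = Gmid c d.
  have -> : p a ++ q b ++ x c ++ m d ++ x' c ++ q' b ++ p' a =
    (p a ++ q b) ++ (x c ++ m d ++ x' c) ++ (q' b ++ p' a) by rewrite !catA.
  rewrite (Fcat (p a ++ q b)) (Fcat (x c ++ m d ++ x' c)).
  rewrite (Gcat (p a ++ q b)) (Gcat (x c ++ m d ++ x' c)).
  rewrite (mulgA (F (p a ++ q b))) (mulgA (G (p a ++ q b))).
  exact: mulg_sandwichE.
apply/agreeE/(square_agree (F := Fmid)) => [a b c d /agree/agreeE // | L_eq | F_eq].
- have L_split a b : L a b = (G (q b))^-1 * ((G (p a))^-1 * F (p a)) * F (q b).
    by rewrite /L !Fcat !Gcat invgM !mulgA.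
  by move: L_eq; rewrite !L_split => /mulIg/mulgI ->.
- by move: F_eq; rewrite /Fmid !Fcat => /mulgI/mulIg ->.
Qed.

End CommuteTransitiveGroup.

Section BijectiveNumeral.
Variables (T : eqType) (b : nat) (d : T -> nat).
Hypothesis d_range : forall x, 0 < d x < b.

Lemma base_gt0 (x : T) : 0 < b.
Proof. by case/andP: (d_range x) => d_gt0 /(leq_ltn_trans (leq0n _)). Qed.

Definition numeral (s : seq T) : nat := foldl (fun n x => n * b + d x) 0 s.

Lemma foldl_numeral n s :
  foldl (fun n x => n * b + d x) n s = n * b ^ size s + numeral s.
Proof.
elim: s n => [|x s IHs] n /=; first by rewrite muln1 addn0.
by rewrite /numeral /= !IHs mul0n add0n expnS mulnDl addnA mulnA.
Qed.

Lemma numeral_cat u v : numeral (u ++ v) = numeral u * b ^ size v + numeral v.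
Proof. by rewrite /numeral foldl_cat foldl_numeral. Qed.

Lemma numeral_rcons s x : numeral (rcons s x) = numeral s * b + d x.
Proof. by rewrite -cats1 numeral_cat expn1 /numeral /= add0n. Qed.

Lemma numeral_lt s : numeral s < b ^ size s.
Proof.
elim/last_ind: s => [|s x IHs] //; rewrite numeral_rcons size_rcons expnSr.
by have /andP[_ dx] := d_range x; nia.
Qed.

Lemma numeral_ge s : 0 < size s -> b ^ (size s).-1 <= numeral s.
Proof.
elim/last_ind: s => [|s x IHs] // _; rewrite numeral_rcons size_rcons /=.
have /andP[dx _] := d_range x; case: s IHs => [|y s] IHs; first by rewrite expn0.
by rewrite expnSr; apply: leq_trans (leq_addr _ _); rewrite leq_mul2r IHs ?orbT.
Qed.

Lemma numeral_size t s : numeral t < numeral s -> size t <= size s.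
Proof.
apply: contraTT; rewrite -!ltnNge => lt_st.
have t_gt0 : 0 < size t by apply: leq_ltn_trans lt_st.
have b_gt0 : 0 < b by case: t t_gt0 {lt_st} => // x t _; apply: base_gt0 x.
apply: leq_trans (ltnW (numeral_lt s)) (leq_trans _ (numeral_ge t_gt0)).
by rewrite leq_pexp2l // -ltnS prednK.
Qed.

Lemma numeral_ctx a t s c :
  numeral t < numeral s -> numeral (a ++ t ++ c) < numeral (a ++ s ++ c).
Proof.
move=> lt_ts; have le_ts := numeral_size lt_ts.
have b_gt0 : 0 < b by case: s lt_ts {le_ts} => // x s _; apply: base_gt0 x.
rewrite !catA !(numeral_cat (a ++ _)) ltn_add2r ltn_pmul2r ?expn_gt0 ?b_gt0 //.
rewrite !numeral_cat; rewrite -(ltn_add2l (numeral a * b ^ size s)) in lt_ts.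
by apply: leq_ltn_trans lt_ts; rewrite leq_add2r leq_mul2l leq_pexp2l ?le_ts ?orbT.
Qed.

Lemma numeral_inj (A : pred T) :
  {in A &, injective d} -> {in [pred s | all A s] &, injective numeral}.
Proof.
move=> d_inj; elim/last_ind=> [|s x IHs] t; case/lastP: t => [|t y] //;
  rewrite !inE ?all_rcons ?numeral_rcons; rewrite -?[numeral [::]]/0.
- by have /andP[] := d_range y; lia.
- by have /andP[] := d_range x; lia.
move=> /andP[Ax As] /andP[Ay At] e.
have /andP[_ dx] := d_range x; have /andP[_ dy] := d_range y.
have b_gt0 := base_gt0 x.
have e_digit := congr1 (modn^~ b) e; have e_rest := congr1 (divn^~ b) e.
rewrite /= !modnMDl !modn_small // in e_digit.
rewrite /= !divnMDl // !divn_small // !addn0 in e_rest.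
by rewrite (IHs _ As At e_rest) (d_inj _ _ Ax Ay e_digit).
Qed.

End BijectiveNumeral.

(* The algebra library is imported only here: its [linear] would hide the one of
   context-free grammars. *)
Section AffineWords.
Import all_algebra GRing.Theory.

Section AffineGroup.
Local Open Scope ring_scope.
Variable F : fieldType.

(* [(a, b)] is the affine map [x |-> a x + b], composed left to right. *)
Definition aff := {p : F * F | p.1 != 0}.
HB.instance Definition _ := Choice.on aff.

Definition mk_aff (a b : F) (a0 : a != 0) : aff := exist _ (a, b) a0.

Definition aff_one : aff := mk_aff 0 (oner_neq0 F).

Lemma aff_mul_subproof (x y : aff) : (val x).1 * (val y).1 != 0.
Proof. by rewrite mulf_neq0 //; [case: x | case: y]. Qed.
Definition aff_mul (x y : aff) : aff :=
  mk_aff ((val x).2 * (val y).1 + (val y).2) (aff_mul_subproof x y).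

Lemma aff_inv_subproof (x : aff) : (val x).1^-1 != 0.
Proof. by rewrite invr_eq0; case: x. Qed.
Definition aff_inv (x : aff) : aff :=
  mk_aff (- ((val x).2 / (val x).1)) (aff_inv_subproof x).

Lemma aff_mulA : associative aff_mul.
Proof. by move=> [[a b] ?] [[c d] ?] [[e h] ?]; apply: val_inj; congr (_, _) => /=; ring. Qed.
Lemma aff_mul1g : left_id aff_one aff_mul.
Proof. by move=> [[a b] ?]; apply: val_inj; congr (_, _) => /=; ring. Qed.
Lemma aff_mulg1 : right_id aff_one aff_mul.
Proof. by move=> [[a b] ?]; apply: val_inj; congr (_, _) => /=; ring. Qed.
Lemma aff_mulVg : left_inverse aff_one aff_inv aff_mul.
Proof. by move=> [[a b] a0]; apply: val_inj; congr (_, _) => /=; field. Qed.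
Lemma aff_mulgV : right_inverse aff_one aff_inv aff_mul.
Proof. by move=> [[a b] a0]; apply: val_inj; congr (_, _) => /=; field. Qed.

HB.instance Definition _ :=
  isGroup.Build aff aff_mulA aff_mul1g aff_mulg1 aff_mulVg aff_mulgV.

Lemma cross_eq0_trans (u1 u2 v1 v2 w1 w2 : F) : (v1, v2) != (0, 0) ->
  u1 * v2 = u2 * v1 -> v1 * w2 = v2 * w1 -> u1 * w2 = u2 * w1.
Proof.
move=> v_neq0 uv vw; apply/eqP; rewrite -subr_eq0.
have [v10 | v1_neq0] := eqVneq v1 0.
  have v2_neq0 : v2 != 0 by apply: contraNneq v_neq0 => v20; rewrite v10 v20.
  rewrite -(mulIr_eq0 _ (mulIf v2_neq0)).
  suff -> : (u1 * w2 - u2 * w1) * v2 = u2 * (v1 * w2 - v2 * w1) - w2 * (u2 * v1 - u1 * v2).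
    by rewrite vw uv !subrr !mulr0 subrr.
  by ring.
rewrite -(mulIr_eq0 _ (mulIf v1_neq0)).
suff -> : (u1 * w2 - u2 * w1) * v1 = u1 * (v1 * w2 - v2 * w1) + w1 * (u1 * v2 - u2 * v1).
  by rewrite vw uv !subrr !mulr0 addr0.
by ring.
Qed.

Lemma aff_commuteE (x y : aff) :
  commute x y <-> ((val x).1 - 1) * (val y).2 = (val x).2 * ((val y).1 - 1).
Proof.
case: x y => [[a b] a0] [[c d] c0]; rewrite /commute /=.
have cross : (a - 1) * d - b * (c - 1) = (d * a + b) - (b * c + d) by ring.
split=> [/(congr1 val) [_ e] | e]; first by apply: subr0_eq; rewrite cross e subrr.
apply: val_inj; congr (_, _) => /=; first by ring.
by apply/esym/subr0_eq; rewrite -cross e subrr.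
Qed.

Lemma aff_neq1 (x : aff) : x != 1%g -> ((val x).1 - 1, (val x).2) != (0, 0).
Proof.
case: x => [[a b] a0] /=; apply: contraNneq => -[/eqP]; rewrite subr_eq0 => /eqP a1 b0.
by apply/eqP/val_inj; rewrite /= a1 b0.
Qed.

End AffineGroup.

Lemma aff_commute_transitive (F : fieldType) : commute_transitive (aff F).
Proof.
move=> x y z /aff_neq1 y_neq1 /aff_commuteE xy /aff_commuteE yz.
exact/aff_commuteE/(cross_eq0_trans y_neq1).
Qed.

Section WordEncoding.
Import Num.Theory.
Variable Gam : finType.

Definition letter_digit (x : Gam) : nat := (enum_rank x).+1.

Lemma letter_digit_range x : 0 < letter_digit x < #|Gam|.+1.
Proof. by rewrite /letter_digit /= ltnS. Qed.

Definition word_numeral := numeral #|Gam|.+1 letter_digit.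

Lemma word_numeral_inj : injective word_numeral.
Proof.
move=> u v; apply: (numeral_inj letter_digit_range (A := predT)); rewrite ?inE ?all_predT //.
by move=> x y _ _ /succn_inj/val_inj/enum_rank_inj.
Qed.

Lemma word_base_neq0 (w : seq Gam) : ((#|Gam|.+1)%:R ^+ size w != 0 :> rat)%R.
Proof. by rewrite expf_neq0 // pnatr_eq0. Qed.

(* The affine map [x |-> B^|w| x + numeral w], with [B] the numeration base. *)
Definition aff_of_word (w : seq Gam) : aff rat :=
  mk_aff (word_numeral w)%:R (word_base_neq0 w).

Lemma aff_of_word_cat : {morph aff_of_word : u v / u ++ v >-> (u * v)%g}.
Proof.
move=> u v; apply: val_inj => /=.
by rewrite size_cat exprD /word_numeral numeral_cat natrD natrM natrX.
Qed.

Lemma aff_of_word_inj : injective aff_of_word.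
Proof. by move=> u v /(congr1 val) [_ /eqP]; rewrite eqr_nat => /eqP /word_numeral_inj. Qed.

End WordEncoding.

Lemma free_monoid_embedding (Gam : finType) :
  exists (H : groupType) (e : seq Gam -> H),
    [/\ commute_transitive H, {morph e : u v / u ++ v >-> (u * v)%g} & injective e].
Proof.
exists (aff rat), (@aff_of_word Gam).
split; [exact: aff_commute_transitive | exact: aff_of_word_cat | exact: aff_of_word_inj].
Qed.

End AffineWords.

Scheme gen_mind := Induction for gen Sort Prop
  with gen_rhs_mind := Induction for gen_rhs Sort Prop.

Section LinearGrammar.
Variables (N Sigma : finType) (G : cfg N Sigma).
Hypothesis G_linear : linear G.

Notation symbol := (N + Sigma)%type.
Notation rule := (N * seq symbol)%type.
Notation nonterm := (@is_nonterm N Sigma).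

Definition nt_of (x : symbol) : option N := if x is inl B then Some B else None.
Definition rule_nt (r : rule) : option N := ohead (pmap nt_of r.2).

Fixpoint expand (y : seq Sigma) (s : seq symbol) : seq Sigma :=
  if s is x :: s' then (if x is inr a then a :: expand y s' else y ++ expand y s')
  else [::].

(* A derivation of a linear grammar is the sequence of rules it applies; the
   word derived is built from the last rule outwards. *)
Fixpoint yield (ds : seq rule) : seq Sigma :=
  if ds is r :: ds' then expand (yield ds') r.2 else [::].

Fixpoint walk (X : N) (ds : seq rule) : bool :=
  if ds is r :: ds' then
    [&& r \in rules G, r.1 == X & if rule_nt r is Some B then walk B ds' else nilp ds']
  else true.

(* [Some Y] if the walk stops at the nonterminal [Y], [None] once it has
   applied a terminal rule. *)
Fixpoint walk_end (X : N) (ds : seq rule) : option N :=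
  if ds is r :: ds' then (if rule_nt r is Some B then walk_end B ds' else None)
  else Some X.

Definition derivation (X : N) (ds : seq rule) : bool :=
  walk X ds && (walk_end X ds == None).

Definition terminals (s : seq symbol) : seq Sigma :=
  pmap (fun x => if x is inr a then Some a else None) s.
Fixpoint rhs_left (s : seq symbol) : seq Sigma :=
  if s is inr a :: s' then a :: rhs_left s' else [::].
Fixpoint rhs_right (s : seq symbol) : seq Sigma :=
  if s is x :: s' then (if x is inr _ then rhs_right s' else terminals s') else [::].

Fixpoint left_ctx (ds : seq rule) : seq Sigma :=
  if ds is r :: ds' then rhs_left r.2 ++ left_ctx ds' else [::].
Fixpoint right_ctx (ds : seq rule) : seq Sigma :=
  if ds is r :: ds' then right_ctx ds' ++ rhs_right r.2 else [::].

Lemma expand_terminals y s : ~~ has nonterm s -> expand y s = terminals s.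
Proof. by elim: s => [|[B|a] s IHs] //= s_term; rewrite IHs. Qed.

Lemma expand_linear y s : count nonterm s <= 1 -> has nonterm s ->
  expand y s = rhs_left s ++ y ++ rhs_right s.
Proof.
elim: s => [|[B|a] s IHs] //=; last by rewrite add0n => s1 s_nt; rewrite IHs.
by rewrite add1n ltnS leqn0 => /eqP s0 _; rewrite expand_terminals // has_count s0.
Qed.

Lemma rule_ntN (r : rule) : (rule_nt r != None) = has nonterm r.2.
Proof. by case: r => A s; rewrite /rule_nt /=; elim: s => [|[B|a] s IHs]. Qed.

Lemma rule_nt_mem (r : rule) B :
  count nonterm r.2 <= 1 -> inl B \in r.2 -> rule_nt r = Some B.
Proof.
case: r => A s /=; rewrite /rule_nt /=.
elim: s => [|[C|a] s IHs] //=.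
rewrite add1n ltnS leqn0 inE => /eqP s0 /orP[/eqP[->] // | s_B].
suff : has nonterm s by rewrite has_count s0.
by apply/hasP; exists (inl B).
Qed.

Lemma walk_cat X ds es :
  walk X (ds ++ es) = walk X ds && (if walk_end X ds is Some Y then walk Y es else nilp es).
Proof.
elim: ds X => [|r ds IHds] X //=.
case: (rule_nt r) => [B|] /=; first by rewrite IHds !andbA.
by rewrite /nilp size_cat addn_eq0 !andbA.
Qed.

Lemma walk_end_cat X ds es :
  walk_end X (ds ++ es) = if walk_end X ds is Some Y then walk_end Y es else None.
Proof. by elim: ds X => [|r ds IHds] X //=; case: (rule_nt r). Qed.

Lemma walk_rules X ds : walk X ds -> all (mem (rules G)) ds.
Proof.
elim: ds X => [|r ds IHds] X //= /and3P[-> _].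
by case: (rule_nt r) => [B /IHds | /nilP ->].
Qed.

Lemma yield_cat X ds es Y : walk X ds -> walk_end X ds = Some Y ->
  yield (ds ++ es) = left_ctx ds ++ yield es ++ right_ctx ds.
Proof.
elim: ds X => [|r ds IHds] X /=; first by rewrite cats0.
case/and3P=> r_G _; case r_nt: (rule_nt r) => [B|] // ds_walk ds_end.
rewrite (expand_linear _ (G_linear r_G)) -?rule_ntN ?r_nt //.
by rewrite (IHds B) // !catA.
Qed.

Lemma derivation_cat X s M Y :
  walk X s -> walk_end X s = Some Y -> derivation X (s ++ M) = derivation Y M.
Proof. by move=> s_walk s_end; rewrite /derivation walk_cat walk_end_cat s_walk s_end. Qed.

Lemma derivation_replace X s t M : walk X s -> walk X t -> walk_end X s = walk_end X t ->
  derivation X (s ++ M) = derivation X (t ++ M).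
Proof.
by move=> s_walk t_walk e; rewrite /derivation !walk_cat !walk_end_cat s_walk t_walk e.
Qed.

Lemma expand_gen_rhs y s : (forall B, inl B \in s -> gen G B y) -> gen_rhs G s (expand y s).
Proof.
elim: s => [|[B|a] s IHs] s_gen /=; first exact: gen_nil.
  by apply: gen_nonterm; [apply: s_gen; rewrite mem_head | apply: IHs => C C_s;
    apply: s_gen; rewrite inE C_s orbT].
by apply: gen_term; apply: IHs => C C_s; apply: s_gen; rewrite inE C_s orbT.
Qed.

Lemma derivation_gen X ds : derivation X ds -> gen G X (yield ds).
Proof.
elim: ds X => [|r ds IHds] X //.
rewrite /derivation /= => /andP[/and3P[r_G /eqP rX ds_walk] ds_end].
have rX_G : (X, r.2) \in rules G by rewrite -rX -surjective_pairing.
apply: (gen_rule rX_G); apply: expand_gen_rhs => B /(rule_nt_mem (G_linear r_G)) r_nt.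
by apply: IHds; rewrite r_nt in ds_walk ds_end; rewrite /derivation ds_walk ds_end.
Qed.

Lemma rule_nt_some (r : rule) B : rule_nt r = Some B -> inl B \in r.2.
Proof.
case: r => A s; rewrite /rule_nt /=.
by elim: s => [|[C|a] s IHs] //=; case=> ->; rewrite mem_head.
Qed.

Definition derives X w := exists2 ds, derivation X ds & yield ds = w.
Definition derives_rhs s w := count nonterm s <= 1 ->
  exists2 ds, (forall B, inl B \in s -> derivation B ds) & expand (yield ds) s = w.

Lemma derives_rule A s w : (A, s) \in rules G -> derives_rhs s w -> derives A w.
Proof.
move=> As_G /(_ (G_linear As_G)) [ds ds_der <-].
case As_nt: (rule_nt (A, s)) => [B|].
  have /andP[ds_walk ds_end] := ds_der B (rule_nt_some As_nt).
  exists ((A, s) :: ds) => //; rewrite /derivation /= As_nt eqxx ds_walk ds_end !andbT.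
  exact: As_G.
exists [:: (A, s)]; first by rewrite /derivation /= As_nt eqxx !andbT; exact: As_G.
have s_term : ~~ has nonterm s by rewrite -(rule_ntN (A, s)) As_nt.
by rewrite /= !expand_terminals.
Qed.

Lemma derives_rhs_nil : derives_rhs [::] [::].
Proof. by exists [::]. Qed.

Lemma derives_rhs_term a s w : derives_rhs s w -> derives_rhs (inr a :: s) (a :: w).
Proof. by move=> s_w /s_w [ds ds_der <-]; exists ds. Qed.

Lemma derives_rhs_nt B s u v :
  derives B u -> derives_rhs s v -> derives_rhs (inl B :: s) (u ++ v).
Proof.
move=> [ds ds_der <-] s_v; rewrite /derives_rhs /= add1n ltnS leqn0 => /eqP s0.
have s_term : ~~ has nonterm s by rewrite has_count s0.
have [ds' _ <-] := s_v (leq_trans (eq_leq s0) (leq0n 1)).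
exists ds => [C | /=]; last by rewrite !expand_terminals.
rewrite inE => /orP[/eqP[->] // | /(hasPn s_term)] //.
Qed.

Lemma gen_derives A w : gen G A w -> derives A w.
Proof.
exact: (@gen_mind N Sigma G (fun A w _ => derives A w) (fun s w _ => derives_rhs s w)
  (fun A s w As_G _ => derives_rule As_G) derives_rhs_nil
  (fun a s w _ => @derives_rhs_term a s w) (fun B s u v _ Bu _ => derives_rhs_nt Bu)).
Qed.

Definition rule_digit (r : rule) : nat := (index r (rules G)).+1.

(* Shortlex order on rule sequences, realised as a bijective numeration. *)
Definition walk_key : seq rule -> nat := numeral (size (rules G)).+2 rule_digit.

Lemma rule_digit_range r : 0 < rule_digit r < (size (rules G)).+2.
Proof. by rewrite /rule_digit /= !ltnS index_size. Qed.

Lemma walk_key_inj : {in [pred ds | all (mem (rules G)) ds] &, injective walk_key}.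
Proof.
apply: (numeral_inj (A := mem (rules G)) rule_digit_range).
by move=> r s r_G s_G /succn_inj/index_inj; apply.
Qed.

Lemma walk_key_ctx p t s q :
  walk_key t < walk_key s -> walk_key (p ++ t ++ q) < walk_key (p ++ s ++ q).
Proof. exact: (numeral_ctx rule_digit_range). Qed.

Lemma walk_key_ind (P : seq rule -> Prop) :
  (forall ds, (forall es, walk_key es < walk_key ds -> P es) -> P ds) -> forall ds, P ds.
Proof.
move=> IH ds; have [n] := ubnP (walk_key ds); elim: n ds => // n IHn ds lt_ds_n.
by apply: IH => es lt_es_ds; apply: IHn; apply: leq_trans lt_es_ds _.
Qed.

Definition shortcut X s t :=
  [/\ walk X t, walk_end X t = walk_end X s & walk_key t < walk_key s].

Definition canonical X ds := walk X ds /\ forall t, ~ shortcut X ds t.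

Lemma canonical_nil X : canonical X [::].
Proof. by split=> // t []. Qed.

Lemma not_canonical X ds : walk X ds -> ~ canonical X ds -> exists t, shortcut X ds t.
Proof.
move=> ds_walk ds_nc; apply: NNPP => no_t; apply: ds_nc; split=> // t t_sc.
by apply: no_t; exists t.
Qed.

Lemma canonical_uniq X ds es :
  canonical X ds -> canonical X es -> walk_end X ds = walk_end X es -> ds = es.
Proof.
move=> [ds_walk ds_can] [es_walk es_can] e.
case: (ltngtP (walk_key ds) (walk_key es)) => [lt_ds | lt_es | ].
- by case: (es_can ds); split.
- by case: (ds_can es); split.
by apply: walk_key_inj; rewrite inE; apply: walk_rules; eassumption.
Qed.

Lemma first_noncanonical X ds : walk X ds -> canonical X ds \/
  exists K e ds', [/\ ds = K ++ e :: ds', canonical X K & ~ canonical X (rcons K e)].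
Proof.
elim/last_ind: ds => [|ds x IHds]; first by left; exact: canonical_nil.
have [ds_x_can | ds_x_nc] := classic (canonical X (rcons ds x)); first by left.
rewrite -cats1 walk_cat => /andP[/IHds [ds_can | [K [e [ds' [-> K_can Ke_nc]]]]] _]; right.
  by exists ds, x, [::]; rewrite cats1.
by exists K, e, (rcons ds' x); rewrite -cats1 -catA.
Qed.

Definition improvable X s := walk X s /\ exists t, shortcut X s t.

Lemma derivation_catE X s M : derivation X (s ++ M) ->
  walk X s /\ (if walk_end X s is Some Y then derivation Y M else M = [::]).
Proof.
rewrite /derivation walk_cat walk_end_cat.
by case: (walk_end X s) => [Y|] /andP[/andP[-> M_walk] M_end]; split=> //;
  [rewrite M_walk | apply/nilP].
Qed.

Lemma walk_end_rcons X K e :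
  walk_end X K = Some e.1 -> walk_end X (rcons K e) = rule_nt e.
Proof. by move=> K_end; rewrite -cats1 walk_end_cat K_end /=; case: (rule_nt e). Qed.

Lemma derivation_first_break X ds : derivation X ds -> canonical X ds \/
  exists K e ds', [/\ ds = K ++ e :: ds', canonical X K, walk_end X K = Some e.1,
    improvable X (rcons K e) & if rule_nt e is Some B then derivation B ds' else ds' = [::]].
Proof.
move=> ds_der; have /andP[ds_walk _] := ds_der.
case: (first_noncanonical ds_walk) => [| [K [e [ds' [ds_eq K_can Ke_nc]]]]]; first by left.
subst ds.
have /derivation_catE[Ke_walk ds'_der] : derivation X (rcons K e ++ ds') by rewrite cat_rcons.
have K_end : walk_end X K = Some e.1.
  move: Ke_walk; rewrite -cats1 walk_cat; case: (walk_end X K) => [Y|] /andP[_] //=.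
  by case/and3P=> _ /eqP ->.
right; exists K, e, ds'; split=> //; first by split=> //; exact: not_canonical Ke_walk Ke_nc.
by rewrite -(walk_end_rcons K_end).
Qed.

(* [split_by X es ds]: cutting [ds] at the rules [es] leaves canonical walks. *)
Fixpoint split_by (X : N) (es ds : seq rule) : Prop :=
  if es is e :: es' then
    exists K ds', [/\ ds = K ++ e :: ds', canonical X K, walk_end X K = Some e.1 &
      if rule_nt e is Some B then split_by B es' ds' else ds' = [::] /\ es' = [::]]
  else canonical X ds.

(* A segment ending with a terminal rule must be the last one. *)
Fixpoint improvable_segs (n : nat) (X : N) (ds : seq rule) : Prop :=
  if n is n'.+1 then
    exists s ds', [/\ ds = s ++ ds', improvable X s &
      if walk_end X s is Some Y then improvable_segs n' Y ds' else ds' = [::] /\ n' = 0]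
  else derivation X ds.

Lemma decompose k X ds : derivation X ds ->
  (exists2 es, size es <= k & split_by X es ds) \/ improvable_segs k.+1 X ds.
Proof.
elim: k X ds => [|k IHk] X ds /derivation_first_break
  [ds_can | [K [e [ds' [-> K_can K_end Ke_imp ds'_der]]]]]; try by left; exists [::].
- right; exists (rcons K e), ds'; rewrite cat_rcons (walk_end_rcons K_end).
  by split=> //; case: (rule_nt e) ds'_der.
case e_nt: (rule_nt e) ds'_der => [B|] ds'_der; last first.
  by left; exists [:: e] => //; exists K, ds'; rewrite e_nt.
case: (IHk B ds' ds'_der) => [[es es_k ds'_es] | ds'_segs].
  by left; exists (e :: es) => //; exists K, ds'; rewrite e_nt.
by right; exists (rcons K e), ds'; rewrite cat_rcons (walk_end_rcons K_end) e_nt.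
Qed.

Lemma split_by_uniq es X ds ds' :
  split_by X es ds -> split_by X es ds' -> derivation X ds -> derivation X ds' -> ds = ds'.
Proof.
elim: es X ds ds' => [|e es IHes] X ds ds' /=.
  by move=> ds_can ds'_can /andP[_ /eqP ds_end] /andP[_ /eqP ds'_end];
    apply: canonical_uniq ds_can ds'_can _; rewrite ds_end ds'_end.
move=> [K [d [-> K_can K_end d_split]]] [K' [d' [-> K'_can K'_end d'_split]]].
have <- : K = K' by apply: canonical_uniq K_can K'_can _; rewrite K_end K'_end.
rewrite -!cat_rcons => /derivation_catE[_ d_der] /derivation_catE[_ d'_der].
rewrite (walk_end_rcons K_end) in d_der d'_der; congr (_ ++ _).
case: (rule_nt e) d_split d'_split d_der d'_der => [B|] d_split d'_split; first exact: IHes.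
by case: d_split => -> _; case: d'_split => -> _.
Qed.

Lemma split_by_rules es X ds : split_by X es ds -> walk X ds -> all (mem (rules G)) es.
Proof.
elim: es X ds => [|e es IHes] X ds //= [K [d [-> K_can K_end d_split]]].
rewrite -cat_rcons walk_cat (walk_end_rcons K_end) => /andP[Ke_walk d_walk].
have /walk_rules := Ke_walk; rewrite all_rcons => /andP[e_G _]; apply/andP; split=> //.
by case: (rule_nt e) d_split d_walk => [B d_split /(IHes B d d_split) | [_ ->]].
Qed.

Fixpoint rule_seqs (n : nat) : seq (seq rule) :=
  if n is n'.+1 then [::] :: [seq r :: s | r <- undup (rules G), s <- rule_seqs n']
  else [:: [::]].

Lemma size_rule_seqs n : size (rule_seqs n.+1) = 1 + nrules G * size (rule_seqs n).
Proof. by rewrite /= size_allpairs. Qed.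

Lemma mem_rule_seqs n es : size es <= n -> all (mem (rules G)) es -> es \in rule_seqs n.
Proof.
elim: n es => [|n IHn] [|e es] //= es_n /andP[e_G es_G]; rewrite inE /=.
by apply: (allpairs_f (fun r s => r :: s)); rewrite ?mem_undup // IHn.
Qed.

Definition pick_word (es : seq rule) : option (seq Sigma) :=
  match excluded_middle_informative
          (exists ds, derivation (start G) ds /\ split_by (start G) es ds) with
  | left ex => Some (yield (proj1_sig (constructive_indefinite_description _ ex)))
  | right _ => None
  end.

Definition test_words : seq (seq Sigma) := undup (pmap pick_word (rule_seqs 3)).

Lemma pick_wordP es w : pick_word es = Some w ->
  exists ds, [/\ derivation (start G) ds, split_by (start G) es ds & w = yield ds].
Proof.
rewrite /pick_word; case: excluded_middle_informative => // ex [<-].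
by case: constructive_indefinite_description => ds [ds_der ds_es]; exists ds.
Qed.

Lemma test_words_derivation w :
  w \in test_words -> exists2 ds, derivation (start G) ds & w = yield ds.
Proof.
rewrite mem_undup mem_pmap => /mapP[es _ /esym/pick_wordP[ds [ds_der _ ->]]].
by exists ds.
Qed.

Lemma test_words_split ds es : derivation (start G) ds -> split_by (start G) es ds ->
  size es <= 3 -> yield ds \in test_words.
Proof.
move=> ds_der ds_es es3; rewrite mem_undup mem_pmap.
have es_seqs : es \in rule_seqs 3.
  by apply: mem_rule_seqs es3 (split_by_rules ds_es _); case/andP: ds_der.
apply/mapP; exists es => //; rewrite /pick_word; case: excluded_middle_informative.
  move=> ex; case: constructive_indefinite_description => ds' [ds'_der ds'_es] /=.
  by rewrite (split_by_uniq ds'_es ds_es ds'_der ds_der).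
by case; exists ds.
Qed.

Lemma derivation_terminal X ds : derivation X ds -> exists2 r, r \in ds & rule_nt r = None.
Proof.
elim: ds X => [|r ds IHds] X; first by rewrite /derivation.
rewrite /derivation /= => /andP[/and3P[_ _ ds_walk] ds_end].
case r_nt: (rule_nt r) ds_walk ds_end => [B|] ds_walk ds_end; last first.
  by exists r; rewrite ?mem_head.
have /IHds[r' r'_ds r'_nt] : derivation B ds by rewrite /derivation ds_walk ds_end.
by exists r' => //; rewrite inE r'_ds orbT.
Qed.

(* With a single rule [r], the only derivation is [[:: r]]. *)
Lemma size_test_words_small : nrules G <= 1 -> size test_words <= nrules G.
Proof.
move=> R_le1; have rules_eq r r' : r \in rules G -> r' \in rules G -> r = r'.
  move=> r_G r'_G; apply/eqP; apply: contraTT R_le1 => r_r'; rewrite -ltnNge.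
  have : uniq [:: r; r'] by rewrite /= inE r_r'.
  move/uniq_leq_size; apply=> x; rewrite !inE mem_undup.
  by case/orP=> /eqP ->.
rewrite /nrules -(size_map (fun r => yield [:: r])).
apply: uniq_leq_size (undup_uniq _) _ => w /test_words_derivation[[|r ds] ds_der ->] //.
have [r' r'_ds r'_nt] := derivation_terminal ds_der.
have /andP[/and3P[r_G _ ds_walk] _] := ds_der.
have r'_G : r' \in rules G by apply: (allP (walk_rules (proj1 (andP ds_der)))).
move: ds_walk; rewrite -(rules_eq _ _ r'_G r_G) r'_nt => /nilP ->.
by apply: map_f; rewrite mem_undup.
Qed.

Lemma size_test_words : size test_words <= 2 * nrules G ^ 3.
Proof.
have [R_le1 | R_gt1] := leqP (nrules G) 1.
  by apply: leq_trans (size_test_words_small R_le1) _; nia.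
apply: leq_trans (size_undup _) _; rewrite size_pmap; apply: leq_trans (count_size _ _) _.
rewrite !size_rule_seqs /=; nia.
Qed.

Lemma improvable_segs_derivation n X ds : improvable_segs n X ds -> derivation X ds.
Proof.
elim: n X ds => [|n IHn] X ds //= [s [ds' [-> [s_walk _]]]].
case s_end: (walk_end X s) => [Y|]; first by rewrite (derivation_cat _ s_walk s_end) => /IHn.
by case=> -> _; rewrite cats0 /derivation s_walk s_end.
Qed.

Definition pick (b : bool) (t s : seq rule) : seq rule := if b then s else t.

Lemma walk_pick X b s t : walk X s -> shortcut X s t -> walk X (pick b t s).
Proof. by case: b => // _ []. Qed.

Lemma walk_end_pick X b s t : shortcut X s t -> walk_end X (pick b t s) = walk_end X s.
Proof. by case: b => // -[]. Qed.

Lemma walk_key_pick X p q b s t : shortcut X s t ->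
  walk_key (p ++ pick b t s ++ q) <= walk_key (p ++ s ++ q) ?= iff b.
Proof.
case: b => [_ | [_ _ /(walk_key_ctx p q) lt_ts]]; first exact/leqif_refl.
by split; [exact: ltnW | rewrite ltn_eqF].
Qed.

Section Variants.
Variables (X0 X1 X2 X3 : N) (s1 s2 s3 s4 t1 t2 t3 t4 r : seq rule).
Hypotheses (s1_walk : walk X0 s1) (s1_end : walk_end X0 s1 = Some X1).
Hypotheses (s2_walk : walk X1 s2) (s2_end : walk_end X1 s2 = Some X2).
Hypotheses (s3_walk : walk X2 s3) (s3_end : walk_end X2 s3 = Some X3).
Hypotheses (s4_walk : walk X3 s4) (s4r_der : derivation X3 (s4 ++ r)).
Hypotheses (t1_sc : shortcut X0 s1 t1) (t2_sc : shortcut X1 s2 t2).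
Hypotheses (t3_sc : shortcut X2 s3 t3) (t4_sc : shortcut X3 s4 t4).

Let walk1 b := walk_pick b s1_walk t1_sc.
Let walk2 b := walk_pick b s2_walk t2_sc.
Let walk3 b := walk_pick b s3_walk t3_sc.
Let end1 b : walk_end X0 (pick b t1 s1) = Some X1 := etrans (walk_end_pick b t1_sc) s1_end.
Let end2 b : walk_end X1 (pick b t2 s2) = Some X2 := etrans (walk_end_pick b t2_sc) s2_end.
Let end3 b : walk_end X2 (pick b t3 s3) = Some X3 := etrans (walk_end_pick b t3_sc) s3_end.

Definition variant a b c d :=
  pick a t1 s1 ++ pick b t2 s2 ++ pick c t3 s3 ++ pick d t4 s4 ++ r.

Lemma variant_derivation a b c d : derivation X0 (variant a b c d).
Proof.
rewrite /variant (derivation_cat _ (walk1 a) (end1 a)) (derivation_cat _ (walk2 b) (end2 b)).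
rewrite (derivation_cat _ (walk3 c) (end3 c)).
by rewrite (derivation_replace _ (walk_pick d s4_walk t4_sc) s4_walk) ?walk_end_pick.
Qed.

Lemma variant_yield a b c d : yield (variant a b c d) =
  left_ctx (pick a t1 s1) ++ left_ctx (pick b t2 s2) ++ left_ctx (pick c t3 s3) ++
  yield (pick d t4 s4 ++ r) ++
  right_ctx (pick c t3 s3) ++ right_ctx (pick b t2 s2) ++ right_ctx (pick a t1 s1).
Proof.
rewrite /variant (yield_cat _ (walk1 a) (end1 a)) (yield_cat _ (walk2 b) (end2 b)).
by rewrite (yield_cat _ (walk3 c) (end3 c)) !catA.
Qed.

Lemma variant_key a b c d :
  walk_key (variant a b c d) <= walk_key (variant true true true true) ?= iff [&& a, b, c & d].
Proof.
have := walk_key_pick [::] (pick b t2 s2 ++ pick c t3 s3 ++ pick d t4 s4 ++ r) a t1_sc.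
move/leqif_trans; apply.
have := walk_key_pick s1 (pick c t3 s3 ++ pick d t4 s4 ++ r) b t2_sc.
move/leqif_trans; apply.
have := walk_key_pick (s1 ++ s2) (pick d t4 s4 ++ r) c t3_sc; rewrite -!catA.
move/leqif_trans; apply.
by have := walk_key_pick (s1 ++ s2 ++ s3) r d t4_sc; rewrite -!catA.
Qed.

End Variants.

Lemma improvable_segsS n X ds : improvable_segs n.+2 X ds ->
  exists s ds' Y, [/\ ds = s ++ ds', improvable X s, walk_end X s = Some Y &
    improvable_segs n.+1 Y ds'].
Proof.
move=> [s [ds' [-> s_imp]]]; case s_end: (walk_end X s) => [Y|] => [ds'_segs | []] //.
by exists s, ds', Y.
Qed.

Lemma derivation_agree (H : groupType) (F F' : seq Sigma -> H) :
    commute_transitive H ->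
    {morph F : u v / u ++ v >-> (u * v)%g} -> {morph F' : u v / u ++ v >-> (u * v)%g} ->
    {in test_words, F =1 F'} ->
  forall ds, derivation (start G) ds -> F (yield ds) = F' (yield ds).
Proof.
move=> CT Fcat F'cat agree; elim/walk_key_ind=> ds IH ds_der.
have [[es es3 ds_es] | segs] := decompose 3 ds_der.
  exact/agree/(test_words_split ds_der ds_es).
have [s1 [d1 [X1 [ds_eq [s1_walk [t1 t1_sc]] s1_end d1_segs]]]] := improvable_segsS segs.
have [s2 [d2 [X2 [d1_eq [s2_walk [t2 t2_sc]] s2_end d2_segs]]]] := improvable_segsS d1_segs.
have [s3 [d3 [X3 [d2_eq [s3_walk [t3 t3_sc]] s3_end d3_segs]]]] := improvable_segsS d2_segs.
have d3_der := improvable_segs_derivation d3_segs.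
case: d3_segs d3_der => s4 [r [d3_eq [s4_walk [t4 t4_sc]] _]] s4r_der.
subst ds d1 d2 d3.
have vy := variant_yield s4 t4 r s1_walk s1_end s2_walk s2_end s3_walk s3_end
  t1_sc t2_sc t3_sc.
rewrite -[s1 ++ _]/(variant s1 s2 s3 s4 t1 t2 t3 t4 r true true true true) in IH *.
rewrite vy.
apply: (nested_agree CT Fcat F'cat (p := fun a => left_ctx (pick a t1 s1))
  (q := fun b => left_ctx (pick b t2 s2)) (x := fun c => left_ctx (pick c t3 s3))
  (m := fun d => yield (pick d t4 s4 ++ r)) (x' := fun c => right_ctx (pick c t3 s3))
  (q' := fun b => right_ctx (pick b t2 s2)) (p' := fun a => right_ctx (pick a t1 s1)))
  => a b c d abcd.
rewrite -vy; apply: IH; last first.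
  exact: variant_derivation s1_walk s1_end s2_walk s2_end s3_walk s3_end s4_walk s4r_der
    t1_sc t2_sc t3_sc t4_sc a b c d.
by rewrite (ltn_leqif (variant_key r t1_sc t2_sc t3_sc t4_sc a b c d)).
Qed.

End LinearGrammar.

Theorem theorem1 (N Sigma : finType) (G : cfg N Sigma) :
  linear G ->
  exists T : seq (seq Sigma),
    test_set (lang G) T /\ size T <= 2 * nrules G ^ 3.
Proof.
move=> G_linear; exists (test_words G); split; last exact: size_test_words.
split=> [w /test_words_derivation[ds ds_der ->] | Gam f g [_ fcat] [_ gcat] agree w].
  exact: (derivation_gen G_linear ds_der).
case/(gen_derives G_linear)=> ds ds_der <-.
have [H [e [CT ecat e_inj]]] := free_monoid_embedding Gam.
apply: e_inj; apply: (derivation_agree G_linear CT (F := e \o f) (F' := e \o g)) ds_der.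
- by move=> u v /=; rewrite fcat ecat.
- by move=> u v /=; rewrite gcat ecat.
- by move=> u /agree /= ->.
Qed.
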